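(* Let $(\mathcal A;\mathcal E)$ be an exact category and let $\mathcal J_1,\mathcal J_2$ be special preenveloping ideals of $\mathcal A$. Then $\mathcal J_1\cap\mathcal J_2$ is a special preenveloping ideal. Moreover, if $B\in\mathcal A$, $m^1:B\to C^1$ is a special $\mathcal J_1$-preenvelope of $B$ and $m^2:B\to C^2$ is a special $\mathcal J_2$-preenvelope of $B$, then the pushout $m^1\amalg_B m^2: B\to C^1\amalg_B C^2$ is a special $(\mathcal J_1\cap\mathcal J_2)$-preenvelope of $B$.
   Context: $(\mathcal A;\mathcal E)$ is an exact category: an additive category with a class $\mathcal E$ of kernel–cokernel pairs (conflations) $X\xrightarrow{m}Y\xrightarrow{p}Z$ ($m$ an inflation, $p$ a deflation) satisfying the Quillen–Keller axioms. $\mathrm{Ext}(A,B)$ denotes the group of (equivalence classes of) conflations $B\to C\to A$. An ideal $\mathcal J$ of $\mathcal A$ is a family of subgroups $\mathcal J(A,B)\subseteq\mathrm{Hom}(A,B)$ closed under composition on either side with arbitrary morphisms. For morphisms $a:A_0\to A_1$ and $b:B_0\to B_1$, let $\mathrm{Ext}(a,b):\mathrm{Ext}(A_1,B_0)\to\mathrm{Ext}(A_0,B_1)$ be the map sending a conflation to its pushout along $b$ followed by pullback along $a$ (the diagonal of the commutative square formed by $\mathrm{Ext}(A_1,b),\mathrm{Ext}(a,B_0),\mathrm{Ext}(a,B_1),\mathrm{Ext}(A_0,b)$); $a,b$ are Ext-orthogonal if $\mathrm{Ext}(a,b)=0$. For a class $\mathcal M$ of morphisms, ${}^\perp\mathcal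 M$ is the ideal of morphisms $a$ with $\mathrm{Ext}(a,m)=0$ for all $m\in\mathcal M$. A special $\mathcal J$-preenvelope of an object $B$ is a morphism $j:B\to C_0$ in $\mathcal J$ for which there exist conflations $B\xrightarrow{j}C_0\to A_0$ and $B\to C_1\to A_1$ and a morphism of conflations between them with components $1_B$, some $c:C_0\to C_1$, and some $a:A_0\to A_1$ with $a\in{}^\perp\mathcal J$. The ideal $\mathcal J$ is special preenveloping if every object of $\mathcal A$ has a special $\mathcal J$-preenvelope. *)

From HB Require Import structures.
From mathcomp Require Import all_boot all_algebra.
Set Implicit Arguments. Unset Strict Implicit. Unset Printing Implicit Defensive.
Import GRing.Theory.
Local Open Scope ring_scope.

Record PreCat := {
  cObj : Type;
  chom : cObj -> cObj -> zmodType;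
  comp : forall A B C : cObj, chom B C -> chom A B -> chom A C;
  idm : forall A : cObj, chom A A }.

Arguments comp {p A B C}.
Arguments idm {p}.
Notation "g \o_ f" := (comp g f) (at level 40, left associativity) : ring_scope.

Section Basic.
Variable C : PreCat.
Local Notation chom := (@chom C).
Local Notation cObj := (cObj C).

Definition is_iso (A B : cObj) (f : chom A B) : Prop :=
  exists g : chom B A, g \o_ f = idm A /\ f \o_ g = idm B.

Definition is_kernel (X Y Z : cObj) (m : chom X Y) (p : chom Y Z) : Prop :=
  p \o_ m = 0 /\
  forall (T : cObj) (f : chom T Y), p \o_ f = 0 ->
    exists g : chom T X, m \o_ g = f /\ forall g' : chom T X, m \o_ g' = f -> g' = g.

Definition is_cokernel (X Y Z : cObj) (m : chom X Y) (p : chom Y Z) : Prop :=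
  p \o_ m = 0 /\
  forall (T : cObj) (f : chom Y T), f \o_ m = 0 ->
    exists g : chom Z T, g \o_ p = f /\ forall g' : chom Z T, g' \o_ p = f -> g' = g.

Definition is_pushout (B C1 C2 P : cObj) (f : chom B C1) (g : chom B C2)
    (u1 : chom C1 P) (u2 : chom C2 P) : Prop :=
  u1 \o_ f = u2 \o_ g /\
  forall (T : cObj) (x1 : chom C1 T) (x2 : chom C2 T), x1 \o_ f = x2 \o_ g ->
    exists h : chom P T, (h \o_ u1 = x1 /\ h \o_ u2 = x2) /\
      forall h' : chom P T, h' \o_ u1 = x1 /\ h' \o_ u2 = x2 -> h' = h.

Definition is_pullback (B C1 C2 P : cObj) (f : chom C1 B) (g : chom C2 B)
    (v1 : chom P C1) (v2 : chom P C2) : Prop :=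
  f \o_ v1 = g \o_ v2 /\
  forall (T : cObj) (x1 : chom T C1) (x2 : chom T C2), f \o_ x1 = g \o_ x2 ->
    exists h : chom T P, (v1 \o_ h = x1 /\ v2 \o_ h = x2) /\
      forall h' : chom T P, v1 \o_ h' = x1 /\ v2 \o_ h' = x2 -> h' = h.

Definition is_zero_object (Z : cObj) : Prop :=
  (forall A (f g : chom Z A), f = g) /\ (forall A (f g : chom A Z), f = g).

Definition preadditive_axioms : Prop :=
  (forall A B D E (h : chom D E) (g : chom B D) (f : chom A B),
      h \o_ (g \o_ f) = (h \o_ g) \o_ f) /\
  (forall A B (f : chom A B), idm B \o_ f = f) /\
  (forall A B (f : chom A B), f \o_ idm A = f) /\
  (forall A B D (g g' : chom B D) (f : chom A B), (g + g') \o_ f = g \o_ f + g' \o_ f) /\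
  (forall A B D (g : chom B D) (f f' : chom A B), g \o_ (f + f') = g \o_ f + g \o_ f').

Definition additive_axioms : Prop :=
  preadditive_axioms /\
  (exists Z : cObj, is_zero_object Z) /\
  (forall A B : cObj, exists (S : cObj) (i1 : chom A S) (i2 : chom B S)
        (p1 : chom S A) (p2 : chom S B),
      p1 \o_ i1 = idm A /\ p2 \o_ i2 = idm B /\ p2 \o_ i1 = 0 /\ p1 \o_ i2 = 0 /\
      i1 \o_ p1 + i2 \o_ p2 = idm S).

Definition confl_class := forall X Y Z : cObj, chom X Y -> chom Y Z -> Prop.

Definition inflation (E : confl_class) (X Y : cObj) (m : chom X Y) : Prop :=
  exists (Z : cObj) (p : chom Y Z), E X Y Z m p.
Definition deflation (E : confl_class) (Y Z : cObj) (p : chom Y Z) : Prop :=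
  exists (X : cObj) (m : chom X Y), E X Y Z m p.

(* Quillen--Keller axioms (as in Buehler, "Exact categories", Def. 2.1) *)
Definition exact_axioms (E : confl_class) : Prop :=
  (forall X Y Z (m : chom X Y) (p : chom Y Z), E X Y Z m p ->
      is_kernel m p /\ is_cokernel m p) /\
  (forall X Y Z (m : chom X Y) (p : chom Y Z) X' Y' Z' (m' : chom X' Y') (p' : chom Y' Z')
      (x : chom X X') (y : chom Y Y') (z : chom Z Z'),
      E X Y Z m p -> is_iso x -> is_iso y -> is_iso z ->
      y \o_ m = m' \o_ x -> z \o_ p = p' \o_ y -> E X' Y' Z' m' p') /\
  (forall A, deflation E (idm A)) /\ (forall A, inflation E (idm A)) /\
  (forall A B D (p : chom A B) (q : chom B D),
      deflation E p -> deflation E q -> deflation E (q \o_ p)) /\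
  (forall A B D (m : chom A B) (n : chom B D),
      inflation E m -> inflation E n -> inflation E (n \o_ m)) /\
  (forall A B A' (m : chom A B) (f : chom A A'), inflation E m ->
      exists (P : cObj) (m' : chom A' P) (f' : chom B P),
        is_pushout m f f' m' /\ inflation E m') /\
  (forall B D D' (p : chom B D) (f : chom D' D), deflation E p ->
      exists (P : cObj) (p' : chom P D') (f' : chom P B),
        is_pullback p f f' p' /\ deflation E p').

End Basic.

Record ExactCat := {
  ecat :> PreCat;
  conflation : confl_class ecat;
  ecat_additive : additive_axioms ecat;
  ecat_exact : exact_axioms conflation }.

Arguments conflation {e X Y Z}.

Section Ideals.
Variable C : ExactCat.
Local Notation chom := (@chom C).
Local Notation cObj := (cObj C).

Definition is_ideal (J : forall A B : cObj, chom A B -> Prop) : Prop :=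
  (forall A B, J A B 0) /\
  (forall A B (f g : chom A B), J A B f -> J A B g -> J A B (f - g)) /\
  (forall A B D (g : chom B D) (f : chom A B), J A B f -> J A D (g \o_ f)) /\
  (forall A B D (g : chom B D) (f : chom A B), J B D g -> J A D (g \o_ f)).

Record ideal := { idl :> forall A B : cObj, chom A B -> Prop; idl_ideal : is_ideal idl }.

Definition ideal_cap (J1 J2 : ideal) : forall A B : cObj, chom A B -> Prop :=
  fun A B f => J1 A B f /\ J2 A B f.

Definition split_conflation (X Y Z : cObj) (m : chom X Y) (p : chom Y Z) : Prop :=
  exists r : chom Y X, r \o_ m = idm X.

(* Ext(a,b) = 0 for a : A0 -> A1, b : B0 -> B1: for every conflation
   E : B0 -> C -> A1, the class of a^* b_* E (pushout along b, then pullback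
   along a) is zero, i.e. the resulting conflation splits.  b_* E is any
   conflation F : B1 -> D -> A1 receiving a morphism of conflations (b, c, 1)
   from E; a^* F is any conflation G : B1 -> X -> A0 with a morphism of
   conflations (1, x, a) to F.  (These exist and are unique up to equivalence.) *)
Definition ext_zero (A0 A1 B0 B1 : cObj) (a : chom A0 A1) (b : chom B0 B1) : Prop :=
  forall (Cc : cObj) (i : chom B0 Cc) (q : chom Cc A1), conflation i q ->
  forall (D : cObj) (i' : chom B1 D) (q' : chom D A1), conflation i' q' ->
  forall c : chom Cc D, c \o_ i = i' \o_ b -> q' \o_ c = idm A1 \o_ q ->
  forall (X : cObj) (i'' : chom B1 X) (q'' : chom X A0), conflation i'' q'' ->
  forall x : chom X D, x \o_ i'' = i' \o_ idm B1 -> q' \o_ x = a \o_ q'' ->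
  split_conflation i'' q''.

Definition ext_perp (M : forall A B : cObj, chom A B -> Prop)
    (A0 A1 : cObj) (a : chom A0 A1) : Prop :=
  forall (B0 B1 : cObj) (m : chom B0 B1), M B0 B1 m -> ext_zero a m.

Definition special_preenvelope (J : forall A B : cObj, chom A B -> Prop)
    (B C0 : cObj) (j : chom B C0) : Prop :=
  J B C0 j /\
  exists (A0 : cObj) (p0 : chom C0 A0), conflation j p0 /\
  exists (C1 A1 : cObj) (m1 : chom B C1) (p1 : chom C1 A1), conflation m1 p1 /\
  exists (c : chom C0 C1) (a : chom A0 A1),
    c \o_ j = m1 \o_ idm B /\ a \o_ p0 = p1 \o_ c /\ ext_perp J a.

Definition special_preenveloping (J : forall A B : cObj, chom A B -> Prop) : Prop :=
  forall B : cObj, exists (C0 : cObj) (j : chom B C0), special_preenvelope J j.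

End Ideals.

(* The pushout [u1 m1 : B -> P] of two inflations is an inflation, and its
   cokernel [A0] decomposes as the direct sum of the cokernels [A1], [A2] of
   [m1] and [m2].  Pushing out the two conflations [B -> D_i -> A_i'] that
   witness speciality gives a conflation [B -> Q -> A'] and a morphism of
   conflations whose third component [a : A0 -> A'] restricts on [A_i] to
   [be_i a_i] with [a_i] in the left Ext-orthogonal of [J_i].  Since
   [Ext(a_i, j) = 0] forces [Ext(be_i a_i, j) = 0], and [Ext(-, j)] vanishes on
   [a] as soon as it vanishes on both restrictions of [a] to a decomposition of
   [A0], [a] is Ext-orthogonal to [J1 ∩ J2]. *)

From mathcomp Require Import all_boot all_algebra.
Set Implicit Arguments. Unset Strict Implicit. Unset Printing Implicit Defensive.
Import GRing.Theory.
Local Open Scope ring_scope.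

Existing Class preadditive_axioms.

Section Preadditive.
Context {C : PreCat} {HC : preadditive_axioms C}.

Lemma compA {A B D E : cObj C} (h : chom D E) (g : chom B D) (f : chom A B) :
  h \o_ (g \o_ f) = (h \o_ g) \o_ f.
Proof. by case: HC => hA _; apply: hA. Qed.

Lemma comp1l {A B : cObj C} (f : chom A B) : idm B \o_ f = f.
Proof. by case: HC => _ [h _]; apply: h. Qed.

Lemma comp1r {A B : cObj C} (f : chom A B) : f \o_ idm A = f.
Proof. by case: HC => _ [_ [h _]]; apply: h. Qed.

Lemma compDl {A B D : cObj C} (g g' : chom B D) (f : chom A B) :
  (g + g') \o_ f = g \o_ f + g' \o_ f.
Proof. by case: HC => _ [_ [_ [h _]]]; apply: h. Qed.

Lemma compDr {A B D : cObj C} (g : chom B D) (f f' : chom A B) :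
  g \o_ (f + f') = g \o_ f + g \o_ f'.
Proof. by case: HC => _ [_ [_ [_ h]]]; apply: h. Qed.

Lemma comp0l {A B D : cObj C} (f : chom A B) : (0 : chom B D) \o_ f = 0.
Proof. by apply/(addrI ((0 : chom B D) \o_ f)); rewrite -compDl !addr0. Qed.

Lemma comp0r {A B D : cObj C} (g : chom B D) : g \o_ (0 : chom A B) = 0.
Proof. by apply/(addrI (g \o_ (0 : chom A B))); rewrite -compDr !addr0. Qed.

Lemma compNl {A B D : cObj C} (g : chom B D) (f : chom A B) :
  (- g) \o_ f = - (g \o_ f).
Proof. by apply/eqP; rewrite -addr_eq0 -compDl addNr comp0l. Qed.

Lemma compNr {A B D : cObj C} (g : chom B D) (f : chom A B) :
  g \o_ (- f) = - (g \o_ f).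
Proof. by apply/eqP; rewrite -addr_eq0 -compDr addNr comp0r. Qed.

Lemma compBl {A B D : cObj C} (g g' : chom B D) (f : chom A B) :
  (g - g') \o_ f = g \o_ f - g' \o_ f.
Proof. by rewrite compDl compNl. Qed.

Lemma compBr {A B D : cObj C} (g : chom B D) (f f' : chom A B) :
  g \o_ (f - f') = g \o_ f - g \o_ f'.
Proof. by rewrite compDr compNr. Qed.

Lemma is_iso_idm (A : cObj C) : is_iso (idm A).
Proof. by exists (idm A); rewrite comp1l. Qed.

Section KernelsCokernels.
Variables (X Y Z : cObj C) (m : chom X Y) (p : chom Y Z).

Lemma kernel_mono {T : cObj C} (f g : chom T X) :
  is_kernel m p -> m \o_ f = m \o_ g -> f = g.
Proof.
case=> pm0 hk e.
have [k0 [_ hu]] := hk T (m \o_ f) ltac:(by rewrite compA pm0 comp0l).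
by rewrite (hu f erefl) (hu g (esym e)).
Qed.

Lemma kernel_factor {T : cObj C} (f : chom T Y) :
  is_kernel m p -> p \o_ f = 0 -> exists g : chom T X, m \o_ g = f.
Proof. by case=> _ hk e; have [g [? _]] := hk T f e; exists g. Qed.

Lemma cokernel_epi {T : cObj C} (f g : chom Z T) :
  is_cokernel m p -> f \o_ p = g \o_ p -> f = g.
Proof.
case=> pm0 hk e.
have [k0 [_ hu]] := hk T (f \o_ p) ltac:(by rewrite -compA pm0 comp0r).
by rewrite (hu f erefl) (hu g (esym e)).
Qed.

Lemma cokernel_factor {T : cObj C} (f : chom Y T) :
  is_cokernel m p -> f \o_ m = 0 -> exists g : chom Z T, g \o_ p = f.
Proof. by case=> _ hk e; have [g [? _]] := hk T f e; exists g. Qed.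

End KernelsCokernels.

Lemma cokernel_section_of_retraction {X Y Z : cObj C} (m : chom X Y) (p : chom Y Z)
    (r : chom Y X) :
  is_cokernel m p -> r \o_ m = idm X -> exists s : chom Z Y, p \o_ s = idm Z.
Proof.
move=> hc rm; have pm0 := proj1 hc.
have [s ps] := cokernel_factor (f := idm Y - m \o_ r) hc
  ltac:(by rewrite compBl comp1l -compA rm comp1r subrr).
exists s; apply: (cokernel_epi hc).
by rewrite -compA ps compBr comp1r compA pm0 comp0l subr0 comp1l.
Qed.

Lemma kernel_retraction_of_section {X Y Z : cObj C} (m : chom X Y) (p : chom Y Z)
    (s : chom Z Y) :
  is_kernel m p -> p \o_ s = idm Z -> exists r : chom Y X, r \o_ m = idm X.
Proof.
move=> hk ps; have pm0 := proj1 hk.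
have [r mr] := kernel_factor (f := idm Y - s \o_ p) hk
  ltac:(by rewrite compBr comp1r compA ps comp1l subrr).
exists r; apply: (kernel_mono hk).
by rewrite compA mr compBl comp1l -compA pm0 comp0r subr0 comp1r.
Qed.

Section Pushouts.
Variables (B C1 C2 P : cObj C) (f : chom B C1) (g : chom B C2).
Variables (u1 : chom C1 P) (u2 : chom C2 P).

Lemma pushout_epi {T : cObj C} (h h' : chom P T) :
  is_pushout f g u1 u2 -> h \o_ u1 = h' \o_ u1 -> h \o_ u2 = h' \o_ u2 -> h = h'.
Proof.
case=> e hp e1 e2.
have [k0 [_ hu]] := hp T (h \o_ u1) (h \o_ u2) ltac:(by rewrite -!compA e).
by rewrite (hu h (conj erefl erefl)) (hu h' (conj (esym e1) (esym e2))).
Qed.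

Lemma pushout_factor {T : cObj C} (x1 : chom C1 T) (x2 : chom C2 T) :
  is_pushout f g u1 u2 -> x1 \o_ f = x2 \o_ g ->
  exists h : chom P T, h \o_ u1 = x1 /\ h \o_ u2 = x2.
Proof. by case=> _ hp e; have [h [[? ?] _]] := hp T x1 x2 e; exists h. Qed.

Lemma pushout_sym : is_pushout f g u1 u2 -> is_pushout g f u2 u1.
Proof.
case=> e hp; split=> [|T' x2 x1 ex]; first by rewrite e.
have [h [[? ?] hu]] := hp T' x1 x2 (esym ex).
by exists h; split=> // h' [? ?]; apply: hu.
Qed.

End Pushouts.

Lemma pushout_iso {B C1 C2 P P' : cObj C} (f : chom B C1) (g : chom B C2)
    (u1 : chom C1 P) (u2 : chom C2 P) (v1 : chom C1 P') (v2 : chom C2 P') :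
  is_pushout f g u1 u2 -> is_pushout f g v1 v2 ->
  exists phi : chom P P', [/\ is_iso phi, phi \o_ u1 = v1 & phi \o_ u2 = v2].
Proof.
move=> po po'.
have [phi [phi1 phi2]] := pushout_factor po (proj1 po').
have [psi [psi1 psi2]] := pushout_factor po' (proj1 po).
exists phi; split=> //; exists psi; split.
- by apply: (pushout_epi po); rewrite -compA ?phi1 ?phi2 ?psi1 ?psi2 !comp1l.
- by apply: (pushout_epi po'); rewrite -compA ?psi1 ?psi2 ?phi1 ?phi2 !comp1l.
Qed.

Section Pullbacks.
Variables (B C1 C2 P : cObj C) (f : chom C1 B) (g : chom C2 B).
Variables (v1 : chom P C1) (v2 : chom P C2).

Lemma pullback_mono {T : cObj C} (h h' : chom T P) :
  is_pullback f g v1 v2 -> v1 \o_ h = v1 \o_ h' -> v2 \o_ h = v2 \o_ h' -> h = h'.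
Proof.
case=> e hp e1 e2.
have [k0 [_ hu]] := hp T (v1 \o_ h) (v2 \o_ h) ltac:(by rewrite !compA e).
by rewrite (hu h (conj erefl erefl)) (hu h' (conj (esym e1) (esym e2))).
Qed.

Lemma pullback_factor {T : cObj C} (x1 : chom T C1) (x2 : chom T C2) :
  is_pullback f g v1 v2 -> f \o_ x1 = g \o_ x2 ->
  exists h : chom T P, v1 \o_ h = x1 /\ v2 \o_ h = x2.
Proof. by case=> _ hp e; have [h [[? ?] _]] := hp T x1 x2 e; exists h. Qed.

End Pullbacks.

Lemma pushout_cokernel_decomposition {B C1 C2 P A0 A1 A2 : cObj C}
    (m1 : chom B C1) (m2 : chom B C2) (p1 : chom C1 A1) (p2 : chom C2 A2)
    (u1 : chom C1 P) (u2 : chom C2 P) (p0 : chom P A0) :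
  is_cokernel m1 p1 -> is_cokernel m2 p2 -> is_pushout m1 m2 u1 u2 ->
  is_cokernel (u1 \o_ m1) p0 ->
  exists (al1 : chom A1 A0) (al2 : chom A2 A0) (s1 : chom A0 A1) (s2 : chom A0 A2),
    [/\ al1 \o_ p1 = p0 \o_ u1, al2 \o_ p2 = p0 \o_ u2
      & al1 \o_ s1 + al2 \o_ s2 = idm A0].
Proof.
move=> hc1 hc2 po hc0.
case: (hc1) (hc2) (hc0) => [p1m1 _] [p2m2 _] [p0m0 _].
have [al1 eal1] := cokernel_factor (f := p0 \o_ u1) hc1 ltac:(by rewrite -compA).
have [al2 eal2] := cokernel_factor (f := p0 \o_ u2) hc2
  ltac:(by rewrite -compA -(proj1 po)).
have [t1 [t1u1 t1u2]] := pushout_factor (x1 := p1) (x2 := 0) po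
  ltac:(by rewrite comp0l).
have [t2 [t2u1 t2u2]] := pushout_factor (x1 := 0) (x2 := p2) po
  ltac:(by rewrite comp0l).
have [s1 es1] := cokernel_factor (f := t1) hc0 ltac:(by rewrite compA t1u1).
have [s2 es2] := cokernel_factor (f := t2) hc0
  ltac:(by rewrite (proj1 po) compA t2u2).
exists al1, al2, s1, s2; split=> //.
apply: (cokernel_epi hc0); rewrite compDl -!compA es1 es2 comp1l.
apply: (pushout_epi po); rewrite compDl -!compA.
- by rewrite t1u1 t2u1 comp0r addr0.
- by rewrite t1u2 t2u2 comp0r add0r.
Qed.

End Preadditive.

Local Notation is_inflation m := (inflation (@conflation _) m).
Local Notation is_deflation p := (deflation (@conflation _) p).

#[export] Instance ecat_preadditive (C : ExactCat) : preadditive_axioms C :=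
  proj1 (ecat_additive C).

Section ExactCategory.
Context {C : ExactCat}.

Section Conflation.
Variables (X Y Z : cObj C) (m : chom X Y) (p : chom Y Z).
Hypothesis mp : conflation m p.

Lemma conflation_kernel : is_kernel m p.
Proof. by case: (ecat_exact C) => h _; case: (h _ _ _ _ _ mp). Qed.

Lemma conflation_cokernel : is_cokernel m p.
Proof. by case: (ecat_exact C) => h _; case: (h _ _ _ _ _ mp). Qed.

Lemma conflation_comp0 : p \o_ m = 0.
Proof. exact: proj1 conflation_kernel. Qed.

Lemma conflation_iso {X' Y' Z' : cObj C} (m' : chom X' Y') (p' : chom Y' Z')
    (x : chom X X') (y : chom Y Y') (z : chom Z Z') :
  is_iso x -> is_iso y -> is_iso z ->
  y \o_ m = m' \o_ x -> z \o_ p = p' \o_ y -> conflation m' p'.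
Proof. by case: (ecat_exact C) => _ [h _]; apply: h mp. Qed.

End Conflation.

Lemma inflation_comp {A B D : cObj C} (m : chom A B) (n : chom B D) :
  is_inflation m -> is_inflation n -> is_inflation (n \o_ m).
Proof. by case: (ecat_exact C) => _ [_ [_ [_ [_ [h _]]]]]; apply: h. Qed.

Lemma inflation_pushout {B C1 C2 : cObj C} (m1 : chom B C1) (m2 : chom B C2) :
  is_inflation m2 ->
  exists (P : cObj C) (u1 : chom C1 P) (u2 : chom C2 P),
    is_pushout m1 m2 u1 u2 /\ is_inflation u1.
Proof.
case: (ecat_exact C) => _ [_ [_ [_ [_ [_ [h _]]]]]] /(h _ _ _ _ m1).
by case=> P [u1 [u2 [/pushout_sym po infl]]]; exists P, u1, u2.
Qed.

Lemma deflation_pullback {B D D' : cObj C} (p : chom B D) (f : chom D' D) :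
  is_deflation p ->
  exists (P : cObj C) (p' : chom P D') (f' : chom P B),
    is_pullback p f f' p' /\ is_deflation p'.
Proof. by case: (ecat_exact C) => _ [_ [_ [_ [_ [_ [_ h]]]]]]; apply: h. Qed.

Lemma pushout_inflation {B C1 C2 P : cObj C} (m1 : chom B C1) (m2 : chom B C2)
    (u1 : chom C1 P) (u2 : chom C2 P) :
  is_inflation m2 -> is_pushout m1 m2 u1 u2 -> is_inflation u1.
Proof.
move=> /(inflation_pushout m1) [P' [v1 [v2 [po' [Z [p cp]]]]]] po.
have [phi [[psi [psiphi phipsi]] phi1 _]] := pushout_iso po' po.
exists Z, (p \o_ psi).
apply: (conflation_iso (y := phi) cp (is_iso_idm C1) _ (is_iso_idm Z)).
- by exists psi.
- by rewrite phi1 comp1r.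
- by rewrite -compA psiphi comp1r comp1l.
Qed.

Lemma conflation_pullback {K Y Z Z' : cObj C} (i : chom K Y) (q : chom Y Z)
    (f : chom Z' Z) :
  conflation i q ->
  exists (Y' : cObj C) (i' : chom K Y') (q' : chom Y' Z') (g : chom Y' Y),
    [/\ conflation i' q', g \o_ i' = i & is_pullback q f g q'].
Proof.
move=> cq; have hk := conflation_kernel cq.
have [P [p' [f' [pb [X0 [m0 cm0]]]]]] :=
  deflation_pullback f (ex_intro _ K (ex_intro _ i cq)).
have [k [fk pk]] := pullback_factor (x1 := i) (x2 := 0) pb
  ltac:(by rewrite (conflation_comp0 cq) comp0r).
have hk0 := conflation_kernel cm0.
have [x ex] := kernel_factor (f := f' \o_ m0) hk
  ltac:(by rewrite compA (proj1 pb) -compA (conflation_comp0 cm0) comp0r).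
have kx : k \o_ x = m0.
  apply: (pullback_mono pb); first by rewrite compA fk ex.
  by rewrite compA pk comp0l (conflation_comp0 cm0).
have [y ey] := kernel_factor hk0 pk.
exists P, k, p', f'; split=> //.
apply: (conflation_iso (x := x) cm0 _ (is_iso_idm P) (is_iso_idm Z')).
- exists y; split.
  + by apply: (kernel_mono hk0); rewrite compA ey kx comp1r.
  + by apply: (kernel_mono hk); rewrite compA ex -compA ey fk comp1r.
- by rewrite comp1l kx.
- by rewrite comp1l comp1r.
Qed.

Lemma pushout_comp_inflation {B C1 C2 P : cObj C} (m1 : chom B C1) (m2 : chom B C2)
    (u1 : chom C1 P) (u2 : chom C2 P) :
  is_inflation m1 -> is_inflation m2 -> is_pushout m1 m2 u1 u2 ->
  is_inflation (u1 \o_ m1).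
Proof.
move=> infl1 infl2 po.
by apply: inflation_comp => //; apply: pushout_inflation infl2 po.
Qed.

Lemma ext_zero_postcomp {A0 A1 A2 B0 B1 : cObj C} (a : chom A0 A1) (g : chom A1 A2)
    (b : chom B0 B1) :
  ext_zero a b -> ext_zero (g \o_ a) b.
Proof.
move=> ab Cc i q cE D i' q' cF c ci cq X i'' q'' cG x xi qx.
(* [G] is also [a^* b_* (g^* E)], with [g^* F] in the role of [b_* (g^* E)]. *)
have [CE [iE [qE [gE [cE1 gEi pbE]]]]] := conflation_pullback g cE.
have [DF [iF [qF [gF [cF1 gFi pbF]]]]] := conflation_pullback g cF.
have [c1 [gFc1 qFc1]] := pullback_factor (x1 := c \o_ gE) (x2 := qE) pbF
  ltac:(by rewrite compA cq comp1l (proj1 pbE)).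
have [x1 [gFx1 qFx1]] := pullback_factor (x1 := x) (x2 := a \o_ q'') pbF
  ltac:(by rewrite qx compA).
apply: (ab _ _ _ cE1 _ _ _ cF1 c1 _ _ _ _ _ cG x1 _ qFx1).
- apply: (pullback_mono pbF).
  + by rewrite !compA gFc1 gFi -compA gEi ci.
  + by rewrite !compA qFc1 (conflation_comp0 cE1) (conflation_comp0 cF1) !comp0l.
- by rewrite comp1l.
- rewrite comp1r; apply: (pullback_mono pbF).
  + by rewrite compA gFx1 gFi xi comp1r.
  + by rewrite compA qFx1 -compA (conflation_comp0 cG) comp0r (conflation_comp0 cF1).
Qed.

Lemma ext_zero_of_decomposition {A0 A A1 A2 B0 B1 : cObj C} (a : chom A0 A)
    (b : chom B0 B1) (al1 : chom A1 A0) (al2 : chom A2 A0)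
    (s1 : chom A0 A1) (s2 : chom A0 A2) :
  al1 \o_ s1 + al2 \o_ s2 = idm A0 ->
  ext_zero (a \o_ al1) b -> ext_zero (a \o_ al2) b -> ext_zero a b.
Proof.
move=> es ab1 ab2 Cc i q cE D i' q' cF c ci cq X i'' q'' cG x xi qx.
have lift (A' : cObj C) (al : chom A' A0) :
    ext_zero (a \o_ al) b -> exists t : chom A' X, q'' \o_ t = al.
  (* [al^* G] represents [Ext(a al, b) E = 0], so it splits. *)
  move=> ab; have [XG [iG [qG [gG [cG' gGi pbG]]]]] := conflation_pullback al cG.
  have [r rG] : split_conflation iG qG.
    apply: (ab _ _ _ cE _ _ _ cF c ci cq _ _ _ cG' (x \o_ gG)).
    - by rewrite -compA gGi.
    - by rewrite compA qx -!compA (proj1 pbG).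
  have [t qGt] := cokernel_section_of_retraction (conflation_cokernel cG') rG.
  by exists (gG \o_ t); rewrite compA (proj1 pbG) -compA qGt comp1r.
have [t1 qt1] := lift _ _ ab1.
have [t2 qt2] := lift _ _ ab2.
apply: (kernel_retraction_of_section (s := t1 \o_ s1 + t2 \o_ s2)
  (conflation_kernel cG)).
by rewrite compDr !compA qt1 qt2.
Qed.

Lemma ext_perp_cap (M1 M2 : forall X Y : cObj C, chom X Y -> Prop)
    {A0 A A1 A2 A1' A2' : cObj C} (a : chom A0 A) (al1 : chom A1 A0)
    (al2 : chom A2 A0) (s1 : chom A0 A1) (s2 : chom A0 A2)
    (a1 : chom A1 A1') (a2 : chom A2 A2') (be1 : chom A1' A) (be2 : chom A2' A) :
  ext_perp M1 a1 -> ext_perp M2 a2 ->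
  a \o_ al1 = be1 \o_ a1 -> a \o_ al2 = be2 \o_ a2 ->
  al1 \o_ s1 + al2 \o_ s2 = idm A0 ->
  ext_perp (fun X Y f => M1 X Y f /\ M2 X Y f) a.
Proof.
move=> pa1 pa2 e1 e2 es B0 B1 b [Mb1 Mb2].
by apply: (ext_zero_of_decomposition es); [rewrite e1 | rewrite e2];
  apply: ext_zero_postcomp; [apply: pa1 | apply: pa2].
Qed.

End ExactCategory.

Section SpecialPreenvelopes.
Context {C : ExactCat} (J1 J2 : ideal C).

Lemma ideal_postcomp (J : ideal C) {A B D : cObj C} (g : chom B D) (f : chom A B) :
  J A B f -> J A D (g \o_ f).
Proof. by case: (idl_ideal J) => _ [_ [h _]]; apply: h. Qed.

Lemma special_preenvelope_inflation (J : ideal C) {B C0 : cObj C} (j : chom B C0) :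
  special_preenvelope J j -> is_inflation j.
Proof. by case=> _ [A0 [p0 [cj _]]]; exists A0, p0. Qed.

Lemma special_preenvelope_pushout {B C1 C2 P : cObj C} (m1 : chom B C1)
    (m2 : chom B C2) (u1 : chom C1 P) (u2 : chom C2 P) :
  special_preenvelope J1 m1 -> special_preenvelope J2 m2 ->
  is_pushout m1 m2 u1 u2 -> special_preenvelope (ideal_cap J1 J2) (u1 \o_ m1).
Proof.
move=> /[dup] /special_preenvelope_inflation infl1
  [J1m1 [A1 [p1 [cm1 [D1 [A1' [n1 [q1 [cn1 [c1 [a1 [ec1 [ea1 pa1]]]]]]]]]]]]]
  /[dup] /special_preenvelope_inflation infl2
  [J2m2 [A2 [p2 [cm2 [D2 [A2' [n2 [q2 [cn2 [c2 [a2 [ec2 [ea2 pa2]]]]]]]]]]]]] po.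
move: ec1 ec2; rewrite !comp1r => ec1 ec2.
split; first by split; [|rewrite (proj1 po)]; apply: ideal_postcomp.
have [A0 [p0 cp0]] := pushout_comp_inflation infl1 infl2 po.
have infln1 : is_inflation n1 by exists A1', q1.
have infln2 : is_inflation n2 by exists A2', q2.
have [Q [v1 [v2 [poQ _]]]] := inflation_pushout n1 infln2.
have [A' [q cq]] := pushout_comp_inflation infln1 infln2 poQ.
have [c [cu1 cu2]] := pushout_factor (x1 := v1 \o_ c1) (x2 := v2 \o_ c2) po
  ltac:(by rewrite -!compA ec1 ec2 (proj1 poQ)).
have cm : c \o_ (u1 \o_ m1) = v1 \o_ n1 by rewrite compA cu1 -compA ec1.
have [a ea] := cokernel_factor (f := q \o_ c) (conflation_cokernel cp0)
  ltac:(by rewrite -compA cm (conflation_comp0 cq)).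
have [al1 [al2 [s1 [s2 [eal1 eal2 es]]]]] := pushout_cokernel_decomposition
  (conflation_cokernel cm1) (conflation_cokernel cm2) po (conflation_cokernel cp0).
have [be1 ebe1] := cokernel_factor (f := q \o_ v1) (conflation_cokernel cn1)
  ltac:(by rewrite -compA (conflation_comp0 cq)).
have [be2 ebe2] := cokernel_factor (f := q \o_ v2) (conflation_cokernel cn2)
  ltac:(by rewrite -compA -(proj1 poQ) (conflation_comp0 cq)).
exists A0, p0; split=> //; exists Q, A', (v1 \o_ n1), q; split=> //.
exists c, a; split; first by rewrite comp1r.
split=> //; apply: (ext_perp_cap (be1 := be1) (be2 := be2) pa1 pa2 _ _ es).
- apply: (cokernel_epi (conflation_cokernel cm1)).
  by rewrite -!compA eal1 ea1 compA ea -compA cu1 !compA ebe1.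
- apply: (cokernel_epi (conflation_cokernel cm2)).
  by rewrite -!compA eal2 ea2 compA ea -compA cu2 !compA ebe2.
Qed.

Lemma special_preenveloping_cap :
  special_preenveloping J1 -> special_preenveloping J2 ->
  special_preenveloping (ideal_cap J1 J2).
Proof.
move=> h1 h2 B.
have [C1 [m1 sm1]] := h1 B; have [C2 [m2 sm2]] := h2 B.
have [P [u1 [u2 [po _]]]] := inflation_pushout m1 (special_preenvelope_inflation sm2).
by exists P, (u1 \o_ m1); apply: special_preenvelope_pushout po.
Qed.

End SpecialPreenvelopes.

Theorem theorem3p1 (C : ExactCat) (J1 J2 : ideal C) :
  special_preenveloping J1 -> special_preenveloping J2 ->
  special_preenveloping (ideal_cap J1 J2) /\
  (forall (B C1 C2 : cObj C) (m1 : chom B C1) (m2 : chom B C2),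
     special_preenvelope J1 m1 -> special_preenvelope J2 m2 ->
     forall (P : cObj C) (u1 : chom C1 P) (u2 : chom C2 P),
       is_pushout m1 m2 u1 u2 ->
       special_preenvelope (ideal_cap J1 J2) (u1 \o_ m1)).
Proof.
move=> h1 h2; split; first exact: special_preenveloping_cap.
by move=> B C1 C2 m1 m2 s1 s2 P u1 u2; apply: special_preenvelope_pushout.
Qed.
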